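(* Let $(\Omega,\mathcal{F})$ be a measurable space, $\mathrm{B}_b$ the space of bounded real-valued measurable functions, $\mathbb{P}$ a probability measure on $(\Omega,\mathcal{F})$, and $H\colon\mathrm{B}_b\to\mathbb{R}$ a premium principle that is dominated by $\mathbb{P}$, i.e. $H(X)=H(Y)$ for all $X,Y\in\mathrm{B}_b$ with $X=Y$ $\mathbb{P}$-a.s. Then $R_{\mathrm{Max}}(X):=\inf\{H(X_0)\mid X_0\in\mathrm{B}_b,\ X_0\ge X\}$, $X\in\mathrm{B}_b$, is dominated by $\mathbb{P}$.
   Context: A premium principle is a map $H\colon\mathrm{B}_b\to\mathbb{R}$ with $H(X+m)=H(X)+m$ for $m\in\mathbb{R}$, $H(0)=0$, and $H(X)\ge0$ for $X\ge0$, where $\le$ is the pointwise order. *)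

From HB Require Import structures.
From mathcomp Require Import all_boot all_order all_algebra.
From mathcomp Require Import all_classical all_reals all_analysis.
Set Implicit Arguments. Unset Strict Implicit. Unset Printing Implicit Defensive.
Import Order.TTheory GRing.Theory Num.Theory.
Local Open Scope classical_set_scope.
Local Open Scope ring_scope.

Definition Bb d (T : measurableType d) (R : realType) : set (T -> R) :=
  [set f : T -> R | measurable_fun setT f /\ exists M : R, forall x, `|f x| <= M].

(* Premium principle on B_b (H is a map defined on all functions, but only
   its values on B_b matter). *)
Definition premium_principle d (T : measurableType d) (R : realType)
  (H : (T -> R) -> R) : Prop :=
  [/\ forall X m, @Bb _ T R X -> H (fun x => X x + m) = H X + m,
      H (fun _ => 0) = 0
    & forall X, @Bb _ T R X -> (forall x, 0 <= X x) -> 0 <= H X].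

Definition dominated d (T : measurableType d) (R : realType)
  (P : probability T R) (H : (T -> R) -> R) : Prop :=
  forall X Y, @Bb _ T R X -> @Bb _ T R Y -> {ae P, forall x, X x = Y x} -> H X = H Y.

Definition R_Max d (T : measurableType d) (R : realType)
  (H : (T -> R) -> R) (X : T -> R) : R :=
  inf [set H X0 | X0 in [set X0 | @Bb _ T R X0 /\ forall x, X x <= X0 x]].

From mathcomp Require Import all_boot all_order all_algebra.
From mathcomp Require Import all_classical all_reals all_analysis.
Set Implicit Arguments. Unset Strict Implicit. Unset Printing Implicit Defensive.
Import Order.TTheory GRing.Theory Num.Theory.
Local Open Scope classical_set_scope.
Local Open Scope ring_scope.

(* If X0 >= X lies in B_b and X = Y a.s., then X0 \max Y lies in B_b, dominates
   Y and equals X0 a.s., so it has the same premium as X0.  Hence X and Y have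
   the same sets of premiums of bounded upper bounds, and the same infimum. *)

Lemma Bb_max d (T : measurableType d) (R : realType) (f g : T -> R) :
  Bb f -> Bb g -> Bb (f \max g).
Proof.
move=> [mf [Mf f_le]] [mg [Mg g_le]]; split.
  exact: measurable_realfun.measurable_maxr.
exists (Num.max Mf Mg) => x /=.
have [_|_] := leP (f x) (g x); rewrite le_max ?g_le ?f_le //; exact: orbT.
Qed.

Lemma ae_max_eq_l d (T : measurableType d) (R : realType)
    (mu : {measure set T -> \bar R}) (X Y X0 : T -> R) :
  {ae mu, forall x, X x = Y x} -> (forall x, X x <= X0 x) ->
  {ae mu, forall x, (X0 \max Y) x = X0 x}.
Proof.
move=> XY X_le; apply: filterS XY => x /= <-.
exact/max_idPl.
Qed.

Lemma dominated_premiums_of_upper_bounds_sub d (T : measurableType d)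
    (R : realType) (P : probability T R) (H : (T -> R) -> R) (X Y : T -> R) :
  dominated P H -> Bb Y -> {ae P, forall x, X x = Y x} ->
  [set H X0 | X0 in [set X0 | Bb X0 /\ forall x, X x <= X0 x]] `<=`
  [set H X0 | X0 in [set X0 | Bb X0 /\ forall x, Y x <= X0 x]].
Proof.
move=> domH BbY XY _ [X0 [BbX0 X_le] <-].
exists (X0 \max Y).
  by split; [exact: Bb_max | move=> x /=; rewrite le_max lexx orbT].
by apply: domH; [exact: Bb_max | | exact: ae_max_eq_l XY X_le].
Qed.

Theorem proposition4p1 (d : measure_display) (T : measurableType d)
  (R : realType) (P : probability T R) (H : (T -> R) -> R) :
  premium_principle H -> dominated P H -> dominated P (R_Max H).
Proof.
move=> _ domH X Y BbX BbY XY; rewrite /R_Max; congr inf; apply/seteqP; split.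
  exact: dominated_premiums_of_upper_bounds_sub domH BbY XY.
apply: dominated_premiums_of_upper_bounds_sub domH BbX _.
by apply: filterS XY => x /= ->.
Qed.
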